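(* Let $\mathcal L>0$, $m_\pm>0$, $\rho_\pm>0$, $S_+<0<S_-$, $\lambda_\pm=\sqrt{\rho_\pm/m_\pm}$, and $S_I=0$. Consider the ODE system $\dot q_1=\mathcal H_1^{\rm p}(q_1,q_2)$, $\dot q_2=\mathcal H_2^{\rm p}(q_1,q_2)$ with \[ \mathcal H_1^{\rm p}(q_1,q_2)=\tfrac12\Big(-\tfrac{S_+}{\rho_+}m_+\lambda_+\tanh\big(\lambda_+\tfrac{q_2-q_1}{2}\big)-\tfrac{S_-}{\rho_-}m_-\lambda_-\tanh(\lambda_-q_1)-S_I\Big), \] \[ \mathcal H_2^{\rm p}(q_1,q_2)=\tfrac12\Big(\tfrac{S_+}{\rho_+}m_+\lambda_+\tanh\big(\lambda_+\tfrac{q_2-q_1}{2}\big)+\tfrac{S_-}{\rho_-}m_-\lambda_-\tanh(\lambda_-(\mathcal L-q_2))+S_I\Big). \] Then the triangular set $\mathcal T=\{(q_1,q_2)\in\mathbb R^2: 0\le q_2\le\mathcal L,\ 0\le q_1\le q_2\}$ is invariant for this system: if $(q_1(0),q_2(0))\in\mathcal T$, then any solution $(q_1(t),q_2(t))_{t>0}$ emanating from it satisfies $(q_1(t),q_2(t))\in\mathcal T$ for all $t>0$.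
   Context: This ODE system describes the motion of the two interfaces $z=q_1(t)<z=q_2(t)$ of a flat layer $\Omega_+=(q_1,q_2)\times(0,\tilde{\mathcal L})^{d-1}$ in $(0,\mathcal L)\times(0,\tilde{\mathcal L})^{d-1}$ for the chemically active Mullins--Sekerka problem. *)

From Stdlib Require Import Reals.
From Coquelicot Require Import Coquelicot.
Open Scope R_scope.

Definition tanh (x : R) : R := (exp x - exp (- x)) / (exp x + exp (- x)).

Definition lam (rho m : R) : R := sqrt (rho / m).

(* H_1^p and H_2^p; parameters: L, m_+, m_-, rho_+, rho_-, S_+, S_-, S_I *)
Definition H1p (L mp mm rhop rhom Sp Sm SI q1 q2 : R) : R :=
  / 2 * (- (Sp / rhop) * mp * lam rhop mp * tanh (lam rhop mp * ((q2 - q1) / 2))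
         - (Sm / rhom) * mm * lam rhom mm * tanh (lam rhom mm * q1)
         - SI).

Definition H2p (L mp mm rhop rhom Sp Sm SI q1 q2 : R) : R :=
  / 2 * ((Sp / rhop) * mp * lam rhop mp * tanh (lam rhop mp * ((q2 - q1) / 2))
         + (Sm / rhom) * mm * lam rhom mm * tanh (lam rhom mm * (L - q2))
         + SI).

Definition inT (L q1 q2 : R) : Prop := 0 <= q2 <= L /\ 0 <= q1 <= q2.

From Pilot Require Import Defs.
From Stdlib Require Import Reals Lra Psatz.
From Coquelicot Require Import Coquelicot.
Open Scope R_scope.

(* The triangle is the intersection of the half-planes [q1 >= 0], [q2 <= L] and
   [q2 >= q1], and [negsq y = (min y 0)^2] is the squared distance from [y] to
   [0, +oo), so the penalty [P = negsq q1 + negsq (L - q2) + negsq (q2 - q1)]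
   vanishes exactly on the triangle.  Along the flow, each gap is pushed by its
   own tanh term towards nonnegative values, which contributes a nonpositive
   amount to [P'], while the tanh terms of the other gaps are bounded below by
   [2 c min(g, 0)] because [tanh x >= 2 x] for [x <= 0].  Hence
   [P' <= (2 S_- - S_+) P], and Gronwall's inequality with [P(0) = 0] gives
   [P(t) = 0]. *)

(* [Defs.tanh] is qualified because [Reals] exports a [tanh] of its own. *)
Lemma tanh_exp2 (x : R) : Defs.tanh x = (exp (2 * x) - 1) / (exp (2 * x) + 1).
Proof.
  unfold Defs.tanh.
  assert (Hsq : exp (2 * x) = exp x * exp x) by (rewrite <- exp_plus; f_equal; ring).
  pose proof (exp_pos x).
  rewrite Hsq, exp_Ropp. field. split; nra.
Qed.

Lemma one_le_exp (x : R) : 0 <= x -> 1 <= exp x.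
Proof. intros hx. pose proof (exp_ineq1_le x). lra. Qed.

Lemma exp_le_one (x : R) : x <= 0 -> exp x <= 1.
Proof.
  intros hx. replace x with (- - x) by ring. rewrite exp_Ropp.
  pose proof (one_le_exp (- x) ltac:(lra)).
  rewrite <- Rinv_1. apply Rinv_le_contravar; lra.
Qed.

Lemma tanh_nonpos (x : R) : x <= 0 -> Defs.tanh x <= 0.
Proof.
  intros hx. rewrite tanh_exp2.
  pose proof (exp_le_one (2 * x) ltac:(lra)). pose proof (exp_pos (2 * x)).
  apply Rle_div_l; lra.
Qed.

Lemma tanh_nonneg (x : R) : 0 <= x -> 0 <= Defs.tanh x.
Proof.
  intros hx. rewrite tanh_exp2.
  pose proof (one_le_exp (2 * x) ltac:(lra)).
  apply Rdiv_le_0_compat; lra.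
Qed.

(* For [x <= 0] the numerator [exp (2x) - 1] lies in [[2x, 0]] and the
   denominator is at least 1. *)
Lemma tanh_ge_twice (x : R) : x <= 0 -> 2 * x <= Defs.tanh x.
Proof.
  intros hx. rewrite tanh_exp2.
  pose proof (exp_le_one (2 * x) ltac:(lra)). pose proof (exp_pos (2 * x)).
  pose proof (exp_ineq1_le (2 * x)).
  apply (Rle_div_r _ _ (exp (2 * x) + 1)); [lra |].
  assert (0 <= - x * exp (2 * x)) by (apply Rmult_le_pos; lra).
  lra.
Qed.

Lemma tanh_ge_Rmin (c y : R) : 0 <= c -> 2 * c * Rmin y 0 <= Defs.tanh (c * y).
Proof.
  intros hc. destruct (Rle_dec y 0) as [hy | hy].
  - rewrite Rmin_left by exact hy.
    assert (c * y <= 0) by nra.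
    pose proof (tanh_ge_twice (c * y) ltac:(assumption)). lra.
  - rewrite Rmin_right by lra.
    pose proof (tanh_nonneg (c * y) ltac:(nra)). lra.
Qed.

Lemma Rmin_mul_tanh_ge0 (c x : R) : 0 <= c -> 0 <= Rmin x 0 * Defs.tanh (c * x).
Proof.
  intros hc. destruct (Rle_dec x 0) as [hx | hx].
  - rewrite Rmin_left by exact hx.
    pose proof (tanh_nonpos (c * x) ltac:(nra)). nra.
  - rewrite Rmin_right by lra. lra.
Qed.

Definition negsq (x : R) : R := Rsqr (Rmin x 0).

Lemma negsq_ge0 (x : R) : 0 <= negsq x.
Proof. apply Rle_0_sqr. Qed.

Lemma negsq_of_nonneg (x : R) : 0 <= x -> negsq x = 0.
Proof. intros hx. unfold negsq. rewrite Rmin_right by exact hx. apply Rsqr_0. Qed.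

Lemma negsq_le0 (x : R) : negsq x <= 0 -> 0 <= x.
Proof. unfold negsq, Rsqr, Rmin. destruct (Rle_dec x 0); intros; nra. Qed.

Lemma negsq_taylor (x h : R) :
  Rabs (negsq (x + h) - negsq x - 2 * Rmin x 0 * h) <= h * h.
Proof.
  unfold negsq, Rsqr, Rmin.
  destruct (Rle_dec (x + h) 0), (Rle_dec x 0); apply Rabs_le; nra.
Qed.

Lemma is_derive_negsq (x : R) : is_derive negsq x (2 * Rmin x 0).
Proof.
  apply is_derive_Reals. intros eps heps.
  exists (mkposreal eps heps). intros h hh0 hh. simpl in hh.
  replace ((negsq (x + h) - negsq x) / h - 2 * Rmin x 0)
    with ((negsq (x + h) - negsq x - 2 * Rmin x 0 * h) / h) by (field; exact hh0).
  pose proof (Rabs_pos_lt h hh0).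
  rewrite Rabs_div by exact hh0.
  apply Rle_lt_trans with (Rabs h); [| exact hh].
  apply Rle_div_l; [lra |].
  rewrite <- Rabs_mult, (Rabs_pos_eq (h * h)) by nra.
  apply negsq_taylor.
Qed.

Lemma Rmin_mul_tanh_le (c x y : R) :
  0 <= c -> Rmin x 0 * Defs.tanh (c * y) <= c * (negsq x + negsq y).
Proof.
  intros hc. unfold negsq, Rsqr.
  pose proof (tanh_ge_Rmin c y hc).
  pose proof (Rmin_r x 0). pose proof (Rmin_r y 0).
  assert (Rmin x 0 * Defs.tanh (c * y) <= Rmin x 0 * (2 * c * Rmin y 0))
    by (apply Rmult_le_compat_neg_l; lra).
  assert (0 <= c * ((Rmin x 0 - Rmin y 0) * (Rmin x 0 - Rmin y 0)))
    by (apply Rmult_le_pos; [exact hc | apply Rle_0_sqr]).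
  nra.
Qed.

Definition triangle_penalty (L q1 q2 : R) : R :=
  negsq q1 + negsq (L - q2) + negsq (q2 - q1).

Definition penalty_deriv (L q1 q2 h1 h2 : R) : R :=
  2 * (Rmin q1 0 * h1 - Rmin (L - q2) 0 * h2 + Rmin (q2 - q1) 0 * (h2 - h1)).

Lemma inT_triangle_penalty_eq0 (L q1 q2 : R) :
  inT L q1 q2 -> triangle_penalty L q1 q2 = 0.
Proof.
  unfold inT, triangle_penalty. intros [[h1 h2] [h3 h4]].
  rewrite !negsq_of_nonneg by lra. ring.
Qed.

Lemma triangle_penalty_le0_inT (L q1 q2 : R) :
  triangle_penalty L q1 q2 <= 0 -> inT L q1 q2.
Proof.
  unfold triangle_penalty, inT. intros Hp.
  pose proof (negsq_ge0 q1). pose proof (negsq_ge0 (L - q2)).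
  pose proof (negsq_ge0 (q2 - q1)).
  pose proof (negsq_le0 q1 ltac:(lra)). pose proof (negsq_le0 (L - q2) ltac:(lra)).
  pose proof (negsq_le0 (q2 - q1) ltac:(lra)).
  lra.
Qed.

Lemma is_derive_triangle_penalty (L : R) (q1 q2 : R -> R) (t h1 h2 : R) :
  is_derive q1 t h1 -> is_derive q2 t h2 ->
  is_derive (fun s => triangle_penalty L (q1 s) (q2 s)) t
    (penalty_deriv L (q1 t) (q2 t) h1 h2).
Proof.
  intros d1 d2.
  pose proof (is_derive_comp negsq q1 t _ _ (is_derive_negsq _) d1) as D1.
  pose proof (is_derive_comp negsq (fun s => L - q2 s) t _ _ (is_derive_negsq _)
                (is_derive_minus _ _ t _ _ (is_derive_const L t) d2)) as D2.
  pose proof (is_derive_comp negsq (fun s => q2 s - q1 s) t _ _ (is_derive_negsq _)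
                (is_derive_minus _ _ t _ _ d2 d1)) as D3.
  pose proof (is_derive_plus _ _ t _ _ (is_derive_plus _ _ t _ _ D1 D2) D3) as D.
  match type of D with is_derive _ _ ?l =>
    replace (penalty_deriv L (q1 t) (q2 t) h1 h2) with l; [exact D |] end.
  unfold penalty_deriv, minus, scal, zero, plus, opp; simpl.
  unfold mult; simpl. ring.
Qed.

Lemma filterlim_Rplus {T : Type} {F : (T -> Prop) -> Prop} {FF : Filter F}
  (f g : T -> R) (a b : R) :
  filterlim f F (locally a) -> filterlim g F (locally b) ->
  filterlim (fun x => f x + g x) F (locally (a + b)).
Proof. intros Hf Hg. exact (filterlim_comp_2 f g Rplus Hf Hg (filterlim_plus a b)). Qed.

Lemma filterlim_Rminus {T : Type} {F : (T -> Prop) -> Prop} {FF : Filter F}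
  (f g : T -> R) (a b : R) :
  filterlim f F (locally a) -> filterlim g F (locally b) ->
  filterlim (fun x => f x - g x) F (locally (a - b)).
Proof.
  intros Hf Hg.
  exact (filterlim_Rplus f (fun x => - g x) a (- b) Hf
           (filterlim_comp _ _ _ g opp F (locally b) (locally (- b)) Hg (filterlim_opp b))).
Qed.

Lemma filterlim_triangle_penalty {T : Type} {F : (T -> Prop) -> Prop} {FF : Filter F}
  (L : R) (q1 q2 : T -> R) (a b : R) :
  filterlim q1 F (locally a) -> filterlim q2 F (locally b) ->
  filterlim (fun s => triangle_penalty L (q1 s) (q2 s)) F (locally (triangle_penalty L a b)).
Proof.
  intros H1 H2.
  assert (Hc : forall g y, filterlim g F (locally y) ->
                 filterlim (fun s => negsq (g s)) F (locally (negsq y))).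
  { intros g y Hg. apply (filterlim_comp _ _ _ g negsq F (locally y)); [exact Hg |].
    exact (ex_derive_continuous negsq y (ex_intro _ _ (is_derive_negsq y))). }
  unfold triangle_penalty.
  apply filterlim_Rplus; [apply filterlim_Rplus |]; apply Hc.
  - exact H1.
  - apply filterlim_Rminus; [apply filterlim_const | exact H2].
  - apply filterlim_Rminus; assumption.
Qed.

Lemma penalty_deriv_tanh_le (L a b cp cm q1 q2 : R) :
  0 <= a -> 0 <= b -> 0 <= cp -> 0 <= cm ->
  penalty_deriv L q1 q2
    (/ 2 * (a * Defs.tanh (cp * (q2 - q1)) - b * Defs.tanh (cm * q1)))
    (/ 2 * (- a * Defs.tanh (cp * (q2 - q1)) + b * Defs.tanh (cm * (L - q2))))
  <= 2 * (a * cp + b * cm) * triangle_penalty L q1 q2.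
Proof.
  intros ha hb hcp hcm. unfold penalty_deriv, triangle_penalty.
  pose proof (Rmult_le_pos b _ hb (Rmin_mul_tanh_ge0 cm q1 hcm)).
  pose proof (Rmult_le_pos b _ hb (Rmin_mul_tanh_ge0 cm (L - q2) hcm)).
  pose proof (Rmult_le_pos a _ ha (Rmin_mul_tanh_ge0 cp (q2 - q1) hcp)).
  pose proof (Rmult_le_compat_l a _ _ ha (Rmin_mul_tanh_le cp q1 (q2 - q1) hcp)).
  pose proof (Rmult_le_compat_l a _ _ ha (Rmin_mul_tanh_le cp (L - q2) (q2 - q1) hcp)).
  pose proof (Rmult_le_compat_l b _ _ hb (Rmin_mul_tanh_le cm (q2 - q1) q1 hcm)).
  pose proof (Rmult_le_compat_l b _ _ hb (Rmin_mul_tanh_le cm (q2 - q1) (L - q2) hcm)).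
  assert (0 <= (a * cp + b * cm) * (negsq q1 + negsq (L - q2))).
  { apply Rmult_le_pos; [nra |]. pose proof (negsq_ge0 q1). pose proof (negsq_ge0 (L - q2)). lra. }
  nra.
Qed.

Lemma lam_pos (rho m : R) : 0 < rho -> 0 < m -> 0 < lam rho m.
Proof. intros hr hm. apply sqrt_lt_R0, Rdiv_lt_0_compat; assumption. Qed.

Lemma lam_mul_lam (rho m : R) : 0 < rho -> 0 < m -> lam rho m * lam rho m = rho / m.
Proof. intros hr hm. apply sqrt_sqrt, Rlt_le, Rdiv_lt_0_compat; assumption. Qed.

(* The growth rate is [2 (a c_+ + b c_-)] for [c_+ = lambda_+ / 2], [c_- = lambda_-],
   which collapses to [2 S_- - S_+] because [lambda^2 = rho / m]. *)
Lemma penalty_deriv_Hp_le (L mp mm rhop rhom Sp Sm q1 q2 : R) :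
  0 < mp -> 0 < mm -> 0 < rhop -> 0 < rhom -> Sp <= 0 -> 0 <= Sm ->
  penalty_deriv L q1 q2 (H1p L mp mm rhop rhom Sp Sm 0 q1 q2)
    (H2p L mp mm rhop rhom Sp Sm 0 q1 q2)
  <= (2 * Sm - Sp) * triangle_penalty L q1 q2.
Proof.
  intros hmp hmm hrhop hrhom hSp hSm.
  pose proof (lam_pos rhop mp hrhop hmp). pose proof (lam_pos rhom mm hrhom hmm).
  set (a := - (Sp / rhop) * mp * lam rhop mp).
  set (b := Sm / rhom * mm * lam rhom mm).
  assert (ha : 0 <= a).
  { unfold a. apply Rmult_le_pos; [| lra]. apply Rmult_le_pos; [| lra].
    pose proof (Rinv_0_lt_compat rhop hrhop). unfold Rdiv. nra. }
  assert (hb : 0 <= b).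
  { unfold b. apply Rmult_le_pos; [| lra]. apply Rmult_le_pos; [| lra].
    apply Rdiv_le_0_compat; lra. }
  assert (HK : 2 * (a * (lam rhop mp / 2) + b * lam rhom mm) = 2 * Sm - Sp).
  { unfold a, b.
    replace (- (Sp / rhop) * mp * lam rhop mp * (lam rhop mp / 2))
      with (- (Sp / rhop) * mp * (lam rhop mp * lam rhop mp) / 2) by (unfold Rdiv; ring).
    replace (Sm / rhom * mm * lam rhom mm * lam rhom mm)
      with (Sm / rhom * mm * (lam rhom mm * lam rhom mm)) by (unfold Rdiv; ring).
    rewrite !lam_mul_lam by assumption. field; lra. }
  assert (E : lam rhop mp * ((q2 - q1) / 2) = lam rhop mp / 2 * (q2 - q1))
    by (unfold Rdiv; ring).
  replace (H1p L mp mm rhop rhom Sp Sm 0 q1 q2)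
    with (/ 2 * (a * Defs.tanh (lam rhop mp / 2 * (q2 - q1)) - b * Defs.tanh (lam rhom mm * q1)))
    by (unfold H1p, a, b; rewrite E; unfold Rdiv; ring).
  replace (H2p L mp mm rhop rhom Sp Sm 0 q1 q2)
    with (/ 2 * (- a * Defs.tanh (lam rhop mp / 2 * (q2 - q1)) + b * Defs.tanh (lam rhom mm * (L - q2))))
    by (unfold H2p, a, b; rewrite E; unfold Rdiv; ring).
  rewrite <- HK. apply penalty_deriv_tanh_le; lra.
Qed.

Lemma antitone_of_derive_nonpos (f df : R -> R) (a s t : R) :
  (forall x, a < x -> is_derive f x (df x)) -> (forall x, a < x -> df x <= 0) ->
  a < s -> s <= t -> f t <= f s.
Proof.
  intros Hd Hneg hs hst.
  destruct (MVT_gen f s t df) as [c [hc Hc]]; rewrite ?Rmin_left, ?Rmax_right in * by lra.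
  - intros x hx. apply Hd. lra.
  - intros x hx. apply continuity_pt_filterlim, (ex_derive_continuous f).
    exists (df x). apply Hd. lra.
  - assert (df c <= 0) by (apply Hneg; lra). nra.
Qed.

Lemma gronwall_at_right (V dV : R -> R) (K a t : R) :
  filterlim V (at_right a) (locally (V a)) ->
  (forall s, a < s -> is_derive V s (dV s)) ->
  (forall s, a < s -> dV s <= K * V s) ->
  a < t -> V t <= V a * exp (K * (t - a)).
Proof.
  intros HVa HdV HK ht.
  set (E := fun s => exp (- K * (s - a))).
  set (W := fun s => V s * E s).
  assert (HdE : forall s, is_derive E s (- K * E s)).
  { intros s. unfold E. auto_derive; [exact I | unfold Rminus; ring]. }
  assert (HW : forall s, a < s -> s <= t -> W t <= W s).
  { intros s hs hst.
    apply (antitone_of_derive_nonpos W (fun x => (dV x - K * V x) * E x) a); try lra.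
    - intros x hx. unfold W.
      replace ((dV x - K * V x) * E x) with (dV x * E x + V x * (- K * E x)) by ring.
      apply Derive.is_derive_mult; [apply HdV; lra | apply HdE].
    - intros x hx. pose proof (HK x hx). pose proof (exp_pos (- K * (x - a))).
      unfold E. nra. }
  assert (HEa : filterlim E (at_right a) (locally 1)).
  { replace 1 with (E a) by (unfold E; rewrite Rminus_eq_0, Rmult_0_r; apply exp_0).
    apply (filterlim_filter_le_1 _ (filter_le_within _)).
    exact (ex_derive_continuous E a (ex_intro _ _ (HdE a))). }
  assert (HWa : filterlim W (at_right a) (locally (V a))).
  { rewrite <- (Rmult_1_r (V a)).
    exact (filterlim_comp_2 V E Rmult HVa HEa (filterlim_mult (V a) 1)). }
  assert (HWt : W t <= V a).
  { apply (filterlim_le (F := at_right a) (fun _ => W t) W (W t) (V a)).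
    - exists (mkposreal (t - a) ltac:(lra)). intros s Hs Has. apply HW; [exact Has |].
      unfold ball in Hs; simpl in Hs; unfold AbsRing_ball, abs, minus, plus, opp in Hs; simpl in Hs.
      apply Rabs_def2 in Hs. lra.
    - apply filterlim_const.
    - exact HWa. }
  unfold W, E in HWt.
  replace (V t) with (V t * exp (- K * (t - a)) * exp (K * (t - a))).
  - apply Rmult_le_compat_r; [left; apply exp_pos | exact HWt].
  - rewrite Rmult_assoc, <- exp_plus.
    replace (- K * (t - a) + K * (t - a)) with 0 by ring. rewrite exp_0. ring.
Qed.

Theorem proposition4p1 (L mp mm rhop rhom Sp Sm SI : R)
  (hL : 0 < L) (hmp : 0 < mp) (hmm : 0 < mm) (hrhop : 0 < rhop) (hrhom : 0 < rhom)
  (hSp : Sp < 0) (hSm : 0 < Sm) (hSI : SI = 0)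
  (q1 q2 : R -> R)
  (c1 : filterlim q1 (at_right 0) (locally (q1 0)))
  (c2 : filterlim q2 (at_right 0) (locally (q2 0)))
  (d1 : forall t, 0 < t -> is_derive q1 t (H1p L mp mm rhop rhom Sp Sm SI (q1 t) (q2 t)))
  (d2 : forall t, 0 < t -> is_derive q2 t (H2p L mp mm rhop rhom Sp Sm SI (q1 t) (q2 t)))
  (h0 : inT L (q1 0) (q2 0)) :
  forall t, 0 < t -> inT L (q1 t) (q2 t).
Proof.
  intros t ht. subst SI.
  apply triangle_penalty_le0_inT.
  assert (Hgrowth := gronwall_at_right
    (fun s => triangle_penalty L (q1 s) (q2 s))
    (fun s => penalty_deriv L (q1 s) (q2 s)
                (H1p L mp mm rhop rhom Sp Sm 0 (q1 s) (q2 s))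
                (H2p L mp mm rhop rhom Sp Sm 0 (q1 s) (q2 s)))
    (2 * Sm - Sp) 0 t
    (filterlim_triangle_penalty L q1 q2 (q1 0) (q2 0) c1 c2)
    (fun s hs => is_derive_triangle_penalty L q1 q2 s _ _ (d1 s hs) (d2 s hs))
    (fun s _ => penalty_deriv_Hp_le L mp mm rhop rhom Sp Sm (q1 s) (q2 s)
                  hmp hmm hrhop hrhom (Rlt_le _ _ hSp) (Rlt_le _ _ hSm))
    ht).
  simpl in Hgrowth.
  rewrite (inT_triangle_penalty_eq0 L (q1 0) (q2 0) h0), Rmult_0_l in Hgrowth.
  exact Hgrowth.
Qed.
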